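(* Let $\Gamma$ be a group and let $\mathbb{K}$ be a field. Then the set of normal subgroups $N \subset \Gamma$ such that the group algebra $\mathbb{K}[\Gamma/N]$ is stably finite is closed (and hence compact) in $\mathcal{N}(\Gamma)$.
   Context: $\mathcal{N}(\Gamma)$ denotes the set of normal subgroups of $\Gamma$, viewed as a subset of $\mathcal{P}(\Gamma) = \{0,1\}^\Gamma$ with the prodiscrete (product of discrete) topology. A ring $R$ is stably finite if every square matrix over $R$ which is one-sided invertible is two-sided invertible. *)

From HB Require Import structures.
From mathcomp Require Import all_boot all_order all_algebra.
From mathcomp Require Import all_classical all_reals all_analysis.

Set Implicit Arguments.
Unset Strict Implicit.
Unset Printing Implicit Defensive.

Import GRing.Theory.
Local Open Scope ring_scope.

Section GroupAlgebraQuotient.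
Variables (K : fieldType) (G : groupType).

(* A subset of G, i.e. a point of P(G) = {0,1}^G. *)
Definition normal_subgroup (N : G -> bool) : Prop :=
  [/\ N 1%g,
      (forall x y, N x -> N y -> N (x * y)%g),
      (forall x, N x -> N (x^-1)%g) &
      (forall x g, N x -> N (g^-1 * x * g)%g)].

(* An element of the group algebra K[G/N] is represented by a finite formal
   sum  \sum_i c_i [h_i N]  (a list of pairs (c_i, h_i)).  Two formal sums
   denote the same element of K[G/N] iff, for every coset gN, the sums of
   the coefficients of the terms lying in gN agree. *)
Definition qalg := seq (K * G).

Definition coset_coeff (N : G -> bool) (s : qalg) (g : G) : K :=
  \sum_(p <- s | N (g^-1 * p.2)%g) p.1.

Definition qeq (N : G -> bool) (s t : qalg) : Prop :=
  forall g, coset_coeff N s g = coset_coeff N t g.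

Definition qmul (s t : qalg) : qalg :=
  [seq (p.1 * q.1, (p.2 * q.2)%g) | p <- s, q <- t].

Definition qmx n := 'I_n -> 'I_n -> qalg.

Definition qmx_mul n (A B : qmx n) : qmx n :=
  fun i k => flatten [seq qmul (A i j) (B j k) | j <- enum 'I_n].

Definition qmx_one n : qmx n :=
  fun i j => if i == j then [:: (1, 1%g)] else [::].

Definition qmx_eq N n (A B : qmx n) : Prop := forall i j, qeq N (A i j) (B i j).

Definition quot_alg_stably_finite (N : G -> bool) : Prop :=
  forall n (A B : qmx n),
    qmx_eq N (qmx_mul A B) (@qmx_one n) -> qmx_eq N (qmx_mul B A) (@qmx_one n).

End GroupAlgebraQuotient.

From HB Require Import structures.
From mathcomp Require Import all_boot all_order all_algebra.
From mathcomp Require Import all_classical all_reals all_analysis.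

(* A relation AB = 1 between matrices over K[G/N] mentions only a finite set
   L of group elements, and whether it holds depends only on which quotients
   a^-1 b (a, b in L) lie in N.  If N lies in the closure of the stably
   finite normal subgroups, some such M agrees with N on these finitely many
   quotients; transporting AB = 1 to K[G/M], applying stable finiteness
   there and transporting BA = 1 back shows that K[G/N] is stably finite.
   Being a normal subgroup is likewise a condition on finitely many elements
   at a time, and compactness follows from Tychonoff's theorem. *)

Set Implicit Arguments.
Unset Strict Implicit.
Unset Printing Implicit Defensive.

Local Open Scope classical_set_scope.

Section QuotientAlgebraLocality.
Variables (K : fieldType) (G : groupType).
Local Open Scope group_scope.

Definition is_subgroup (N : G -> bool) : Prop :=
  [/\ N 1, (forall x y, N x -> N y -> N (x * y)) & (forall x, N x -> N x^-1)].

Lemma normal_subgroup_is_subgroup N : normal_subgroup N -> is_subgroup N.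
Proof. by case=> N1 NM NV _; split. Qed.

Definition qalg_support (s : qalg K G) : seq G := [seq p.2 | p <- s].

Definition quotients (L : seq G) : seq G := [seq a^-1 * b | a <- L, b <- L].

Lemma subgroupMl N x y : is_subgroup N -> N x -> N (x * y) = N y.
Proof.
move=> [_ NM NV] Nx; apply/idP/idP => [Nxy | Ny]; last exact: NM.
by rewrite -(mulKg x y); apply: NM => //; apply: NV.
Qed.

Lemma coset_coeff_eq N (s : qalg K G) g a :
  is_subgroup N -> N (g^-1 * a) -> coset_coeff N s g = coset_coeff N s a.
Proof.
move=> subN Nga; apply: eq_bigl => p /=.
by rewrite -{1}(mulVKg a p.2) mulgA (subgroupMl _ subN Nga).
Qed.

Lemma coset_coeff_out N (s : qalg K G) g :
  {in qalg_support s, forall x, ~~ N (g^-1 * x)} -> coset_coeff N s g = 0%R.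
Proof.
move=> out; rewrite /coset_coeff big_seq_cond big1 // => p /andP[ps Np].
by move: (out _ (map_f snd ps)); rewrite Np.
Qed.

Lemma qeq_on N (L : seq G) (s t : qalg K G) : is_subgroup N ->
  {subset qalg_support s <= L} -> {subset qalg_support t <= L} ->
  {in L, coset_coeff N s =1 coset_coeff N t} -> qeq N s t.
Proof.
move=> subN sL tL eqL g.
have [/hasP[a aL Nga] | /hasPn outL] := boolP (has (fun a => N (g^-1 * a)) L).
  by rewrite !(coset_coeff_eq _ subN Nga) eqL.
by rewrite !coset_coeff_out // => x xs; apply: outL;
  first [exact: sL | exact: tL].
Qed.

Lemma coset_coeff_agree N N' (L : seq G) (s : qalg K G) a :
  {in quotients L, N =1 N'} -> {subset qalg_support s <= L} -> a \in L ->
  coset_coeff N s a = coset_coeff N' s a.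
Proof.
move=> agreeL sL aL; rewrite /coset_coeff big_seq_cond [RHS]big_seq_cond.
apply: eq_bigl => p; have [ps | //] /= := boolP (p \in s).
by rewrite agreeL // (allpairs_f (fun a b => a^-1 * b)) // sL // map_f.
Qed.

Lemma qeq_transfer N N' (L : seq G) (s t : qalg K G) :
  is_subgroup N' -> {in quotients L, N =1 N'} ->
  {subset qalg_support s <= L} -> {subset qalg_support t <= L} ->
  qeq N s t -> qeq N' s t.
Proof.
move=> subN' agreeL sL tL eqN; apply: (qeq_on (L := L)) => // a aL.
by rewrite -(coset_coeff_agree agreeL sL aL) -(coset_coeff_agree agreeL tL aL).
Qed.

Definition qmx_support n (A : qmx K G n) : seq G :=
  flatten [seq qalg_support (A i j) | i <- enum 'I_n, j <- enum 'I_n].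

Lemma qmx_support_entry n (A : qmx K G n) i j :
  {subset qalg_support (A i j) <= qmx_support A}.
Proof.
move=> x xA; apply/flattenP; exists (qalg_support (A i j)) => //.
by apply: (allpairs_f (fun i j => qalg_support (A i j))); rewrite mem_enum.
Qed.

Lemma qmx_support_one n : {subset qmx_support (@qmx_one K G n) <= [:: 1]}.
Proof.
move=> x /flattenP[_ /allpairsP[[i j] [_ _ ->]]].
by rewrite /qmx_one; case: (i == j).
Qed.

Lemma qmx_eq_transfer N N' n (L : seq G) (A B : qmx K G n) :
  is_subgroup N' -> {in quotients L, N =1 N'} ->
  {subset qmx_support A <= L} -> {subset qmx_support B <= L} ->
  qmx_eq N A B -> qmx_eq N' A B.
Proof.
move=> subN' agreeL AL BL eqAB i j.
apply: (qeq_transfer subN' agreeL _ _ (eqAB i j)).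
  by move=> x /qmx_support_entry /AL.
by move=> x /qmx_support_entry /BL.
Qed.

Lemma stably_finite_approx N : is_subgroup N ->
  (forall X : seq G, exists2 M,
     is_subgroup M /\ quot_alg_stably_finite K M & {in X, M =1 N}) ->
  quot_alg_stably_finite K N.
Proof.
move=> subN approx n A B AB1.
pose L := 1 :: qmx_support (qmx_mul A B) ++ qmx_support (qmx_mul B A).
have [M [subM sfM] agreeMN] := approx (quotients L).
have agreeNM : {in quotients L, N =1 M} by move=> x /agreeMN.
have oneL : {subset qmx_support (@qmx_one K G n) <= L}.
  by move=> x /qmx_support_one; rewrite !inE => ->.
have ABL : {subset qmx_support (qmx_mul A B) <= L}.
  by move=> x xAB; rewrite !inE mem_cat xAB orbT.
have BAL : {subset qmx_support (qmx_mul B A) <= L}.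
  by move=> x xBA; rewrite !inE mem_cat xBA !orbT.
apply: (qmx_eq_transfer subN agreeMN BAL oneL).
exact: sfM (qmx_eq_transfer subM agreeNM ABL oneL AB1).
Qed.

Lemma normal_subgroup_approx N :
  (forall X : seq G, exists2 M, normal_subgroup M & {in X, M =1 N}) ->
  normal_subgroup N.
Proof.
move=> approx; split.
- by have [M [M1 _ _ _] <-] := approx [:: 1]; rewrite ?inE.
- move=> x y Nx Ny; have [M [_ MM _ _] eqMN] := approx [:: x; y; x * y].
  by rewrite -eqMN ?inE ?eqxx ?orbT // MM // eqMN ?inE ?eqxx ?orbT.
- move=> x Nx; have [M [_ _ MV _] eqMN] := approx [:: x; x^-1].
  by rewrite -eqMN ?inE ?eqxx ?orbT // MV // eqMN ?inE ?eqxx.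
- move=> x g Nx; have [M [_ _ _ MJ] eqMN] := approx [:: x; g^-1 * x * g].
  by rewrite -eqMN ?inE ?eqxx ?orbT // MJ // eqMN ?inE ?eqxx.
Qed.

End QuotientAlgebraLocality.

Section PointwiseTopology.
Variable I : eqType.

Lemma nbhs_ptws_agree (T : discreteTopologicalType) (f : {ptws I -> T})
    (X : seq I) :
  nbhs f [set g : {ptws I -> T} | {in X, g =1 f}].
Proof.
elim: X => [|x X IH]; first by apply: filterS filterT.
have fx : nbhs f [set g : {ptws I -> T} | g x = f x].
  apply: (@proj_continuous I (fun=> T) x f [set f x]).
  by rewrite /= nbhs_principalE => y ->.
apply: (filterS _ (filterI fx IH)) => g [gx gX] y.
by rewrite inE => /predU1P[-> // | /gX].
Qed.

Lemma closure_ptws_agree (T : discreteTopologicalType) (S : set {ptws I -> T})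
    (f : {ptws I -> T}) (X : seq I) :
  closure S f -> exists2 g, S g & {in X, g =1 f}.
Proof. by move=> /(_ _ (nbhs_ptws_agree f X))[g [Sg agreeX]]; exists g. Qed.

Lemma ptws_compact (T : topologicalType) :
  compact [set: T] -> compact [set: {ptws I -> T}].
Proof.
move=> cT; have := @tychonoff I (fun=> T) (fun=> setT) (fun=> cT).
by congr compact; apply/seteqP.
Qed.

End PointwiseTopology.

Theorem corollary1p5 (G : groupType) (K : fieldType) :
  let S : set {ptws G -> bool} :=
    [set N | normal_subgroup N /\ quot_alg_stably_finite K N] in
  closed S /\ compact S.
Proof.
move=> S.
have closedS : closed S.
  move=> N /closure_ptws_agree approx.
  have normalN : normal_subgroup N.
    apply: normal_subgroup_approx => X.
    by have [M [normalM _] agreeX] := approx X; exists M.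
  split=> //; apply: (stably_finite_approx (normal_subgroup_is_subgroup normalN)).
  move=> X; have [M [normalM sfM] agreeX] := approx X.
  by exists M => //; split=> //; apply: normal_subgroup_is_subgroup.
split=> //; apply: (subclosed_compact closedS _ (subsetT S)).
exact: (ptws_compact (I := G) bool_compact).
Qed.
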